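(* Let $f:\mathbb{R}^n\to\mathbb{R}^n$ be a polynomial vector field (each component $f_j$ is a polynomial in $x=(x_1,\ldots,x_n)$ with real coefficients), and let $G$ be the weighted dependency graph of $f$. Suppose that for every cycle $c$ of $G$, the weight $\gamma_c$ is a constant function of $x$. Then $f$ is super-linearizable, i.e., the system $\dot x(t)=f(x(t))$ admits a super-linearization.
   Context: Weighted dependency graph: for a differentiable $f:\mathbb{R}^n\to\mathbb{R}^n$, $G$ is the directed graph (self-loops allowed) on nodes $v_1,\ldots,v_n$ where, with $\gamma_{ij}(x):=\frac{\partial f_j(x)}{\partial x_i}$ for $1\le i,j\le n$, there is a directed edge $v_iv_j$ (from $v_i$ to $v_j$; a self-loop if $i=j$) precisely when $\gamma_{ij}$ is not identically zero, and this edge has weight $\gamma_{ij}$. A cycle is a closed walk $c=v_{i_1}v_{i_2}\cdots v_{i_k}v_{i_1}$ ($k\ge 1$, with $v_{i_1},\ldots,v_{i_k}$ distinct and consecutive nodes joined by edges of $G$; a self-loop is a cycle with $k=1$). For a walk $w=v_{j_1}v_{j_2}\cdots v_{j_r}$, its weight is $\gamma_w:=\prod_{s=1}^{r-1}\gamma_{j_sj_{s+1}}$. Super-linearization: let $\Pi:\mathbb{R}^{n+m}\to\mathbb{R}^n$ be the projection $\Pi(z)=(z_1,\ldots,z_n)$. A vector field $f:\mathbb{R}^n\to\mathbb{R}^n$ is super-linearizable if there exist an integer $m\ge 0$, a matrix $A\in\mathbb{R}^{(n+m)\times(n+m)}$, a vector $D\in\mathbb{R}^{n+m}$ and an injective map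 $p:\mathbb{R}^n\to\mathbb{R}^m$ (the observables) such that for all $x_0\in\mathbb{R}^n$ and all $t$, $\Pi\big(e^{t(Az+D)}z_0\big)=e^{tf}x_0$ where $z_0=(x_0,p(x_0))$. Here $e^{tg}y_0$ denotes the solution at time $t$ of $\dot y=g(y)$ with initial state $y_0$. *)

From HB Require Import structures.
From mathcomp Require Import all_boot all_order all_algebra.
From mathcomp Require Import mpoly.
From mathcomp Require Import Rstruct.
From Stdlib Require Import Reals.

Set Implicit Arguments.
Unset Strict Implicit.
Unset Printing Implicit Defensive.

Import Order.TTheory GRing.Theory Num.Theory.
Open Scope ring_scope.

Notation RR := Rdefinitions.R.

Definition polyVF (n : nat) := 'I_n -> mpoly n RR.

Definition evalVF (n : nat) (f : polyVF n) (x : 'cV[RR]_n) : 'cV[RR]_n :=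
  \col_(j < n) meval (fun k => x k ord0) (f j).

Definition gamma (n : nat) (f : polyVF n) (i j : 'I_n) : mpoly n RR :=
  mderiv i (f j).

Definition dep_edge (n : nat) (f : polyVF n) : rel 'I_n :=
  fun i j => gamma f i j != 0.

(* A cycle v_{i_1} ... v_{i_k} v_{i_1} (k >= 1, distinct nodes, consecutive
   nodes and v_{i_k} v_{i_1} joined by edges), encoded by the sequence
   [:: i_1; ...; i_k]. *)
Definition is_cycle (n : nat) (f : polyVF n) (c : seq 'I_n) : bool :=
  [&& c != [::], uniq c & cycle (dep_edge f) c].

Definition cycle_weight (n : nat) (f : polyVF n) (c : seq 'I_n)
  (x : 'I_n -> RR) : RR :=
  \prod_(e <- zip c (rot 1 c)) meval x (gamma f e.1 e.2).

Definition solves_on (k : nat) (g : 'cV[RR]_k -> 'cV[RR]_k)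
  (y : RR -> 'cV[RR]_k) (a b : RR) : Prop :=
  forall t, a < t < b -> forall i : 'I_k,
    derivable_pt_lim (fun s => y s i ord0) t (g (y t) i ord0).

Definition proj_first (n m : nat) (z : 'cV[RR]_(n + m)) : 'cV[RR]_n :=
  usubmx z.

(* The flow e^{t(Az+D)} z0 is the (unique, global) solution z of the affine
   system z' = A z + D with z 0 = z0; the flow e^{tf} x0 is the solution x of
   x' = f(x), x 0 = x0, on any open interval ]a,b[ around 0 where it exists. *)
Definition super_linearizable (n : nat) (f : polyVF n) : Prop :=
  exists (m : nat) (A : 'M[RR]_(n + m)) (D : 'cV[RR]_(n + m))
         (p : 'cV[RR]_n -> 'cV[RR]_m),
    injective p /\
    forall (x0 : 'cV[RR]_n) (z : RR -> 'cV[RR]_(n + m)),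
      z 0 = col_mx x0 (p x0) ->
      (forall t, solves_on (fun w => A *m w + D) z (t - 1) (t + 1)) ->
      forall (x : RR -> 'cV[RR]_n) (a b : RR),
        a < 0 < b -> x 0 = x0 -> solves_on (evalVF f) x a b ->
        forall t, a < t < b -> proj_first (z t) = x t.

(* If a monomial [m] of [f_j] contains [x_i], then [v_i v_j] is an edge whose
   weight [d f_j / d x_i] contains the monomial [m - e_i]; unless [m = x_i] this
   weight is not constant, so, cycle weights being constant, [v_i v_j] lies on
   no cycle and [v_i] has strictly fewer ancestors than [v_j].  Weighting [x_i]
   by [K ^ (number of ancestors of v_i)], with [K] exceeding every degree in
   [f], every monomial of [f_j] weighs at most [x_j], and the Lie derivative
   [sum_i d_i(x^mu) f_i] of a monomial [x^mu] contains only monomials weighing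
   at most [x^mu].  So the monomials of weight at most [max_j weight(x_j)] span
   a finite-dimensional space containing the coordinates and invariant under
   the Lie derivative; taking them as observables turns [x' = f(x)] into a
   linear system, whose solutions are unique by a Gronwall estimate on
   [|z|^2]. *)

From HB Require Import structures.
From mathcomp Require Import all_boot all_order all_algebra.
From mathcomp Require Import mpoly.
From mathcomp Require Import Rstruct.
From Stdlib Require Import Reals.
From mathcomp Require Import ring lra.

Set Implicit Arguments.
Unset Strict Implicit.
Unset Printing Implicit Defensive.

Import Order.TTheory GRing.Theory Num.Theory.
Open Scope ring_scope.

Lemma sum_digits_inj (D k : nat) (a b : 'I_k -> nat) :
  (forall i, a i < D)%nat -> (forall i, b i < D)%nat ->
  (\sum_(i < k) a i * expn D i = \sum_(i < k) b i * expn D i)%nat -> a =1 b.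
Proof.
elim: k a b => [|k IH] a b aD bD; first by move=> _ [].
have D0 : (0 < D)%nat by apply: leq_ltn_trans (aD ord0).
have shift c : (\sum_(i < k) c (lift ord0 i) * expn D (bump 0 i) =
                (\sum_(i < k) c (lift ord0 i) * expn D i) * D)%nat.
  by rewrite big_distrl; apply: eq_bigr => i _; rewrite expnS mulnCA mulnC.
rewrite !big_ord_recl /= !muln1 !shift !(addnC (_ ord0)) => E.
have a0 : a ord0 = b ord0.
  by have := congr1 (modn^~ D) E; rewrite /= !modnMDl !modn_small.
have /IH E' : (\sum_(i < k) a (lift ord0 i) * expn D i =
               \sum_(i < k) b (lift ord0 i) * expn D i)%nat.
  by have := congr1 (divn^~ D) E; rewrite /= !divnMDl // !divn_small // !addn0.
move=> i; case: (unliftP ord0 i) => [j ->|-> //]; exact: E'.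
Qed.

Lemma poly_eval_eq0 (R : numDomainType) (p : {poly R}) :
  (forall t, p.[t] = 0) -> p = 0.
Proof.
move=> p0; apply: (@roots_geq_poly_eq0 _ p [seq i%:R | i <- iota 0 (size p)]).
- by apply/allP => t _; apply/rootP.
- by rewrite map_inj_uniq ?iota_uniq // => i j /eqP; rewrite eqr_nat => /eqP.
- by rewrite size_map size_iota.
Qed.

Lemma mnm_le_mdeg (n : nat) (m : 'X_{1..n}) i : (m i <= mdeg m)%nat.
Proof. by rewrite mdegE (bigD1 i) //= leq_addr. Qed.

(* Kronecker substitution [x_i := t ^ (D ^ i)], with [D] exceeding every
   exponent, turns [p] into a univariate polynomial with the same coefficients. *)
Lemma mpoly_eval_eq0 (R : numDomainType) (n : nat) (p : {mpoly R[n]}) :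
  (forall v, p.@[v] = 0) -> p = 0.
Proof.
move=> p0; pose D := msize p.
pose e (m : 'X_{1..n}) := (\sum_(i < n) m i * expn D i)%nat.
pose P : {poly R} := \sum_(m <- msupp p) p@_m *: 'X^(e m).
have P0 : P = 0.
  apply: poly_eval_eq0 => t; rewrite -(p0 (fun i => t ^+ expn D i)) mevalE.
  rewrite horner_sum; apply: eq_bigr => m _; rewrite hornerZ hornerXn.
  by congr (_ * _); rewrite -prodrXr; apply: eq_bigr => i _; rewrite -exprM mulnC.
have lt_D m : m \in msupp p -> forall i, (m i < D)%nat.
  by move=> pm i; apply: leq_ltn_trans (mnm_le_mdeg m i) (msize_mdeg_lt pm).
have e_inj : {in msupp p &, injective e}.
  by move=> m1 m2 pm1 pm2 /(sum_digits_inj (lt_D _ pm1) (lt_D _ pm2)) /mnmP.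
apply/mpolyP => m; rewrite mcoeff0.
have [pm|] := boolP (m \in msupp p); last by move/memN_msupp_eq0.
have := congr1 (fun Q : {poly R} => Q`_(e m)) P0.
rewrite coef_sumMXn coef0 big_mkcond (bigD1_seq m) ?msupp_uniq //= eqxx.
rewrite big_seq_cond big1 ?addr0 // => m' /andP[pm' m'm].
by case: eqP => // /(e_inj _ _ pm' pm) m'E; rewrite m'E eqxx in m'm.
Qed.

Lemma msize_gt0 (R : nzRingType) (n : nat) (p : {mpoly R[n]}) :
  p != 0 -> (0 < msize p)%nat.
Proof. by rewrite lt0n msize_poly_eq0. Qed.

Lemma msize_prod_ge (R : idomainType) (n : nat) (I : eqType) (r : seq I)
    (F : I -> {mpoly R[n]}) i :
  all (fun j => F j != 0) r -> i \in r ->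
  (msize (F i) <= msize (\prod_(j <- r) F j))%nat.
Proof.
move=> nzF ri; rewrite (perm_big _ (perm_to_rem ri)) big_cons.
have nz_rest : \prod_(j <- rem i r) F j != 0.
  by rewrite prodf_seq_neq0; apply/allP => j /mem_rem rj; exact: (allP nzF).
rewrite msizeM ?(allP nzF) //.
by rewrite -subn1 -addnBA ?(msize_gt0 nz_rest) ?leq_addr.
Qed.

Lemma msupp_mderiv (R : numDomainType) (n : nat) (p : {mpoly R[n]}) m i :
  m \in msupp p -> (0 < m i)%nat -> (m - U_(i))%MM \in msupp p^`M(i).
Proof.
move=> pm mi; have Um : (U_(i) <= m)%MM by rewrite lep1mP -lt0n.
by rewrite mcoeff_msupp mcoeff_mderiv submK // mulrn_eq0 /= -mcoeff_msupp.
Qed.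

Lemma mderiv_neq0 (R : numDomainType) (n : nat) (p : {mpoly R[n]}) m i :
  m \in msupp p -> (0 < m i)%nat -> p^`M(i) != 0.
Proof.
by move=> pm /(msupp_mderiv pm); apply: contraTneq => ->; rewrite mcoeff_msupp mcoeff0 eqxx.
Qed.

Lemma msize_mderiv_gt1 (R : numDomainType) (n : nat) (p : {mpoly R[n]}) m i :
  m \in msupp p -> (0 < m i)%nat -> m != U_(i)%MM -> (1 < msize p^`M(i))%nat.
Proof.
move=> pm mi mU; apply: leq_trans (msize_mdeg_lt (msupp_mderiv pm mi)).
rewrite ltnS lt0n mdeg_eq0; apply: contra mU => /eqP mU0.
have Um : (U_(i) <= m)%MM by rewrite lep1mP -lt0n.
by rewrite -(submK Um) mU0 add0m.
Qed.

Section CycleEdges.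
Variables (T : eqType) (e : rel T).

Lemma path_rcons_zip (x y : T) s : path e x (rcons s y) ->
  {in zip (x :: s) (rcons s y), forall pr, e pr.1 pr.2}.
Proof.
elim: s x => [|z s IH] x /=; first by rewrite andbT => exy pr /[!inE] /eqP ->.
by case/andP=> exz pz pr /[!inE] /predU1P[-> //|]; apply: IH.
Qed.

Lemma mem_zip_rcons_last (x y : T) s : (last x s, y) \in zip (x :: s) (rcons s y).
Proof. by elim: s x => [|z s IH] x /=; rewrite inE ?IH ?orbT. Qed.

Lemma cycle_zip_edges c : cycle e c -> {in zip c (rot 1 c), forall pr, e pr.1 pr.2}.
Proof. by case: c => [//|x s]; rewrite rot1_cons; exact: path_rcons_zip. Qed.

End CycleEdges.

Lemma edge_on_cycle (T : finType) (e : rel T) i j : e i j -> connect e j i ->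
  exists2 c, [&& c != [::], uniq c & cycle e c] & (i, j) \in zip c (rot 1 c).
Proof.
move=> eij /connectP[p0 /shortenP[p pth uq _] iE].
exists (j :: p); last by rewrite rot1_cons iE mem_zip_rcons_last.
by rewrite uq /= rcons_path pth -iE eij.
Qed.

Section RealDerivatives.
Implicit Types (g h : RR -> RR) (a b t : RR).

Lemma derivable_pt_lim_congr g h t a b :
  g =1 h -> a = b -> derivable_pt_lim g t a -> derivable_pt_lim h t b.
Proof. by move=> gh <-; apply: derivable_pt_lim_ext. Qed.

Lemma derivable_pt_lim_cst a t : derivable_pt_lim (fun=> a) t 0.
Proof. exact: derivable_pt_lim_const. Qed.

Lemma derivable_pt_limD g h t a b :
  derivable_pt_lim g t a -> derivable_pt_lim h t b ->
  derivable_pt_lim (fun s => g s + h s) t (a + b).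
Proof. exact: derivable_pt_lim_plus. Qed.

Lemma derivable_pt_limB g h t a b :
  derivable_pt_lim g t a -> derivable_pt_lim h t b ->
  derivable_pt_lim (fun s => g s - h s) t (a - b).
Proof. exact: derivable_pt_lim_minus. Qed.

Lemma derivable_pt_limM g h t a b :
  derivable_pt_lim g t a -> derivable_pt_lim h t b ->
  derivable_pt_lim (fun s => g s * h s) t (a * h t + g t * b).
Proof. exact: derivable_pt_lim_mult. Qed.

Lemma derivable_pt_lim_sum (I : Type) (r : seq I) (F : I -> RR -> RR) (d : I -> RR) t :
  (forall i, derivable_pt_lim (F i) t (d i)) ->
  derivable_pt_lim (fun s => \sum_(i <- r) F i s) t (\sum_(i <- r) d i).
Proof.
move=> dF; elim: r => [|i r IH].
  by apply: derivable_pt_lim_congr (derivable_pt_lim_cst 0 t) => [s|]; rewrite big_nil.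
by apply: derivable_pt_lim_congr (derivable_pt_limD (dF i) IH) => [s|]; rewrite big_cons.
Qed.

Lemma derivable_pt_lim_expM a t :
  derivable_pt_lim (fun s => exp (a * s)) t (a * exp (a * t)).
Proof.
have := derivable_pt_lim_comp _ exp t _ _ (derivable_pt_lim_scal id a t 1 (derivable_pt_lim_id t))
  (derivable_pt_lim_exp (a * t)).
by apply: derivable_pt_lim_congr => [s|] //; rewrite !RmultE mulr1 mulrC.
Qed.

End RealDerivatives.

Lemma derivable_pt_lim_meval (n : nat) (y : RR -> 'I_n -> RR) (dy : 'I_n -> RR) t
    (q : {mpoly RR[n]}) :
  (forall i, derivable_pt_lim (fun s => y s i) t (dy i)) ->
  derivable_pt_lim (fun s => q.@[y s]) t (\sum_i q^`M(i).@[y t] * dy i).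
Proof.
move=> dy_lim.
pose P q := derivable_pt_lim (fun s => q.@[y s]) t (\sum_i q^`M(i).@[y t] * dy i).
have PC c : P c%:MP.
  apply: derivable_pt_lim_congr (derivable_pt_lim_cst c t) => [s|]; first by rewrite mevalC.
  by rewrite big1 // => i _; rewrite mderivC meval0 mul0r.
have PD q1 q2 : P q1 -> P q2 -> P (q1 + q2).
  move=> d1 d2; apply: derivable_pt_lim_congr (derivable_pt_limD d1 d2) => [s|].
    by rewrite mevalD.
  by rewrite -big_split; apply: eq_bigr => i _; rewrite mderivD mevalD mulrDl.
have PM q1 q2 : P q1 -> P q2 -> P (q1 * q2).
  move=> d1 d2; apply: derivable_pt_lim_congr (derivable_pt_limM d1 d2) => [s|].
    by rewrite mevalM.
  rewrite big_distrl big_distrr -big_split /=; apply: eq_bigr => i _.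
  by rewrite mderivM mevalD !mevalM; ring.
have PX i : P 'X_i.
  apply: derivable_pt_lim_congr (dy_lim i) => [s|]; first by rewrite mevalXU.
  rewrite (bigD1 i) //= big1 => [|k ki]; last first.
    by rewrite mderivX mnm1E eq_sym (negbTE ki) scale0r meval0 mul0r.
  rewrite mderivX mnm1E eqxx scale1r mevalX big1 ?mul1r ?addr0 // => k _.
  by rewrite mnmBE subnn expr0.
have P1 : P 1 by rewrite -mpolyC1; apply: PC.
rewrite [q]mpolyE; apply: (big_ind P); [rewrite -mpolyC0; exact: PC | exact: PD |].
move=> m _; rewrite -mul_mpolyC; apply: (PM) => //.
rewrite mpolyXE_id; apply: (big_ind P) => // i _.
by elim: (m i) => [|k IH]; rewrite ?expr0 ?exprS //; apply: (PM).
Qed.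

(* [E t * exp (- C t)] is nonincreasing and starts at 0. *)
Lemma gronwall_fwd (E dE : RR -> RR) (C t : RR) :
  0 < t -> E 0 = 0 -> 0 <= E t ->
  (forall s, 0 <= s <= t -> derivable_pt_lim E s (dE s)) ->
  (forall s, 0 <= s <= t -> dE s <= C * E s) -> E t = 0.
Proof.
move=> t0 E0 Et0 dE_lim dE_le.
pose h s := E s * exp (- C * s).
pose dh s := dE s * exp (- C * s) + E s * (- C * exp (- C * s)).
have [c [hE [/RltP c0 /RltP ct]]] : exists c, h t - h 0 = dh c * (t - 0) /\ (0 < c < t)%R.
  apply: MVT_cor2 => [|s [/RleP s0 /RleP st]]; first exact/RltP.
  by apply: derivable_pt_limM (derivable_pt_lim_expM _ _); apply: dE_lim; rewrite s0.
have dh_le0 : dh c <= 0.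
  have -> : dh c = (dE c - C * E c) * exp (- C * c) by rewrite /dh; ring.
  apply: mulr_le0_ge0; last exact/ltW/RltP/exp_pos.
  by rewrite subr_le0 dE_le // !ltW.
have ht_le0 : E t * exp (- C * t) <= 0.
  by move: hE; rewrite /h E0 mul0r !subr0 => ->; apply: mulr_le0_ge0 => //; exact: ltW.
apply/eqP; rewrite eq_le Et0 andbT -(ler_pM2r (_ : 0 < exp (- C * t))) ?mul0r //.
exact/RltP/exp_pos.
Qed.

Lemma gronwall_eq0 (E dE : RR -> RR) (C a b : RR) :
  a < 0 < b -> E 0 = 0 -> (forall s, 0 <= E s) -> (forall s, `|dE s| <= C * E s) ->
  (forall s, a < s < b -> derivable_pt_lim E s (dE s)) ->
  forall t, a < t < b -> E t = 0.
Proof.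
move=> /andP[a0 b0] E0 E_ge0 dE_le dE_lim t /andP[a_t t_b].
have [t0|t0|-> //] := ltgtP t 0.
- have := @gronwall_fwd (fun s => E (- s)) (fun s => - dE (- s)) C (- t).
  rewrite opprK oppr0; apply => //; first by rewrite oppr_gt0.
  + move=> s /andP[s0 st]; apply: derivable_pt_lim_mirr_fwd; rewrite !RoppE opprK.
    by apply: dE_lim; rewrite (lt_le_trans a_t) ?(le_lt_trans _ b0) ?oppr_le0 // lerNr.
  + by move=> s _; rewrite (le_trans _ (dE_le (- s))) // -normrN ler_norm.
- apply: (gronwall_fwd t0 E0) => // s /andP[s0 st].
    by apply: dE_lim; rewrite (lt_le_trans a0 s0) (le_lt_trans st t_b).
  exact: le_trans (ler_norm _) (dE_le _).
Qed.

Lemma sqr_le_sum (N : nat) (v : 'I_N -> RR) r : v r ^+ 2 <= \sum_l v l ^+ 2.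
Proof. by rewrite (bigD1 r) //= lerDl sumr_ge0 // => l _; exact: sqr_ge0. Qed.

Lemma normrM_le_sqr (p q E : RR) : p ^+ 2 <= E -> q ^+ 2 <= E -> `|p| * `|q| <= E.
Proof.
rewrite -[p ^+ 2]real_normK ?num_real // -[q ^+ 2]real_normK ?num_real //.
by have := sqr_ge0 (`|p| - `|q|); rewrite sqrrB; nra.
Qed.

Lemma energy_deriv_bound (N : nat) (A : 'M[RR]_N) (v : 'cV[RR]_N) :
  `|\sum_r ((A *m v) r ord0 * v r ord0 + v r ord0 * (A *m v) r ord0)|
    <= (2 * \sum_r \sum_l `|A r l|) * \sum_r v r ord0 ^+ 2.
Proof.
set E := \sum_r v r ord0 ^+ 2.
rewrite mulrC mulrA big_distrr /=; apply: le_trans (ler_norm_sum _ _ _) _; apply: ler_sum => r _.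
have -> : (A *m v) r ord0 * v r ord0 + v r ord0 * (A *m v) r ord0 =
    \sum_l 2 * (A r l * (v r ord0 * v l ord0)).
  rewrite mxE [v r ord0 * _]mulrC -mulr2n big_distrl /= -sumrMnl.
  by apply: eq_bigr => l _; ring.
rewrite big_distrr /=; apply: le_trans (ler_norm_sum _ _ _) _; apply: ler_sum => l _.
rewrite !normrM ger0_norm // [E * 2]mulrC -mulrA ler_pM2l // mulrC.
apply: ler_wpM2r => //.
by apply: normrM_le_sqr; apply: (sqr_le_sum (fun l => v l ord0)).
Qed.

Lemma linear_ode_uniq (N : nat) (A : 'M[RR]_N) (u v : RR -> 'cV[RR]_N) (a b : RR) :
  a < 0 < b -> u 0 = v 0 -> solves_on (mulmx A) u a b -> solves_on (mulmx A) v a b ->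
  forall t, a < t < b -> u t = v t.
Proof.
move=> ab uv0 u_sol v_sol t tab; pose w s := u s - v s.
pose E s := \sum_r w s r ord0 ^+ 2.
pose dE s := \sum_r ((A *m w s) r ord0 * w s r ord0 + w s r ord0 * (A *m w s) r ord0).
have w_lim s : a < s < b ->
    forall r, derivable_pt_lim (fun s => w s r ord0) s ((A *m w s) r ord0).
  move=> sab r.
  apply: derivable_pt_lim_congr (derivable_pt_limB (u_sol s sab r) (v_sol s sab r)).
    by move=> s'; rewrite /w !mxE.
  by rewrite /w mulmxBr !mxE.
have Et : E t = 0.
  apply: (@gronwall_eq0 E dE _ a b ab) => // [|s|s|s sab].
  - by rewrite /E /w uv0 subrr big1 // => r _; rewrite mxE expr0n.
  - by apply: sumr_ge0 => r _; exact: sqr_ge0.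
  - exact: energy_deriv_bound.
  - apply: derivable_pt_lim_sum => r.
    exact: (derivable_pt_lim_congr _ _ (derivable_pt_limM (w_lim s sab r) (w_lim s sab r))).
apply/eqP; rewrite -subr_eq0; apply/eqP/matrixP => r j; rewrite (ord1 j) !mxE.
have /eqP := Et; rewrite psumr_eq0 => [/allP/(_ r (mem_index_enum _))|s _]; last exact: sqr_ge0.
by rewrite /= sqrf_eq0 => /eqP <-; rewrite /w !mxE.
Qed.

Section Superlinearization.
Variables (n : nat) (f : polyVF n).

Definition ancestors j : {set 'I_n} := [set k | connect (dep_edge f) k j].
Definition level j := #|ancestors j|.
Definition weight_base := (\max_(j < n) msize (f j))%nat.+1.
Definition node_weight j := expn weight_base (level j).
Definition wdeg (m : 'X_{1..n}) := (\sum_(i < n) m i * node_weight i)%nat.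

Lemma dep_edge_msupp j m i : m \in msupp (f j) -> (0 < m i)%nat -> dep_edge f i j.
Proof. exact: mderiv_neq0. Qed.

Lemma level_gt0 j : (0 < level j)%nat.
Proof. by apply/card_gt0P; exists j; rewrite inE connect0. Qed.

Lemma ancestors_edge_sub i j : dep_edge f i j -> ancestors i \subset ancestors j.
Proof.
by move=> eij; apply/subsetP => k; rewrite !inE => /connect_trans; apply; exact: connect1.
Qed.

Lemma level_edge_le i j : dep_edge f i j -> (level i <= level j)%nat.
Proof. by move/ancestors_edge_sub/subset_leq_card. Qed.

Lemma level_edge_lt i j : dep_edge f i j -> ~~ connect (dep_edge f) j i ->
  (level i < level j)%nat.
Proof.
move=> eij ji; apply/proper_card/properP; split; first exact: ancestors_edge_sub.
by exists j; rewrite !inE ?connect0.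
Qed.

Lemma wdegU i : wdeg U_(i)%MM = node_weight i.
Proof.
rewrite /wdeg (bigD1 i) //= mnm1E eqxx mul1n big1 ?addn0 // => k ki.
by rewrite mnm1E eq_sym (negbTE ki).
Qed.

Lemma wdegD m1 m2 : wdeg (m1 + m2)%MM = (wdeg m1 + wdeg m2)%nat.
Proof. by rewrite /wdeg -big_split; apply: eq_bigr => i _; rewrite mnmDE mulnDl. Qed.

Lemma mdeg_le_wdeg m : (mdeg m <= wdeg m)%nat.
Proof.
rewrite mdegE; apply: leq_sum => i _.
by rewrite -{1}(muln1 (m i)) leq_mul2l expn_gt0 orbT.
Qed.

Lemma wdeg_le_level_bound L (m : 'X_{1..n}) : (forall i, 0 < m i -> level i < L)%nat ->
  (wdeg m <= mdeg m * expn weight_base L.-1)%nat.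
Proof.
move=> mL; rewrite mdegE big_distrl; apply: leq_sum => i _.
have [->//|mi] := posnP (m i).
rewrite leq_mul2l /node_weight leq_pexp2l ?orbT // -ltnS prednK ?mL //.
exact: leq_ltn_trans (mL i mi).
Qed.

Lemma mdeg_lt_weight_base j m : m \in msupp (f j) -> (mdeg m < weight_base)%nat.
Proof.
by move/msize_mdeg_lt/leq_trans; apply; apply/leqW/leq_bigmax.
Qed.

Definition lie (q : {mpoly RR[n]}) := \sum_(i < n) q^`M(i) * f i.

Lemma derivable_pt_lim_lie (x : RR -> 'cV[RR]_n) t (q : {mpoly RR[n]}) :
  (forall i, derivable_pt_lim (fun s => x s i ord0) t (evalVF f (x t) i ord0)) ->
  derivable_pt_lim (fun s => q.@[fun i => x s i ord0]) t
                   ((lie q).@[fun i => x t i ord0]).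
Proof.
move=> x_lim; apply: derivable_pt_lim_congr (derivable_pt_lim_meval q x_lim) => //.
by rewrite /lie raddf_sum /=; apply: eq_bigr => i _; rewrite mevalM mxE.
Qed.

Definition wdeg_max := (\max_(j < n) node_weight j)%nat.
Definition bounded_mnm : finType :=
  {m : 'X_{1..n < wdeg_max.+1} | (wdeg m <= wdeg_max)%nat}.
Definition obs_mnm (k : 'I_#|bounded_mnm|) : 'X_{1..n} := val (val (enum_val k)).

Lemma obs_mnm_inj : injective obs_mnm.
Proof. by move=> k l /val_inj /val_inj /enum_val_inj. Qed.

Lemma obs_mnm_wdeg k : (wdeg (obs_mnm k) <= wdeg_max)%nat.
Proof. exact: valP (enum_val k). Qed.

Lemma obs_mnm_surj m : (wdeg m <= wdeg_max)%nat -> exists k, obs_mnm k = m.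
Proof.
move=> mW; have mdegW : (mdeg m < wdeg_max.+1)%nat.
  by rewrite ltnS (leq_trans (mdeg_le_wdeg m)).
exists (enum_rank (exist _ (BMultinom mdegW) mW : bounded_mnm)).
by rewrite /obs_mnm enum_rankK.
Qed.

Lemma meval_obs_expand (q : {mpoly RR[n]}) v :
  (forall m, m \in msupp q -> wdeg m <= wdeg_max)%nat ->
  q.@[v] = \sum_k q@_(obs_mnm k) * 'X_[obs_mnm k].@[v].
Proof.
move=> qW; rewrite -[in LHS](_ : \sum_k q@_(obs_mnm k) *: 'X_[obs_mnm k] = q).
  by rewrite raddf_sum /=; apply: eq_bigr => k _; rewrite mevalZ.
apply/mpolyP => m; rewrite raddf_sum /=; under eq_bigr do rewrite mcoeffZ mcoeffX.
have [mW|mW] := boolP (wdeg m <= wdeg_max)%nat.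
  have [k <-] := obs_mnm_surj mW.
  rewrite (bigD1 k) //= eqxx mulr1 big1 ?addr0 // => l lk.
  by rewrite (inj_eq obs_mnm_inj) (negbTE lk) mulr0.
rewrite big1 => [|k _]; last first.
  by case: eqP => [kE|]; [move: (obs_mnm_wdeg k); rewrite kE (negbTE mW) | rewrite mulr0].
by apply/esym/memN_msupp_eq0; apply: contra mW => /qW.
Qed.

Definition obs_vec (x : 'cV[RR]_n) : 'cV[RR]_#|bounded_mnm| :=
  \col_k 'X_[obs_mnm k].@[fun i => x i ord0].

Lemma obs_vec_inj : injective obs_vec.
Proof.
move=> x y /matrixP xy; apply/matrixP => i j; rewrite (ord1 j).
have [k kE] : exists k, obs_mnm k = U_(i)%MM.
  by apply: obs_mnm_surj; rewrite wdegU; exact: leq_bigmax.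
by have := xy k ord0; rewrite !mxE kE !mevalXU.
Qed.

Definition superlin_mx : 'M[RR]_(n + #|bounded_mnm|) :=
  block_mx 0 (\matrix_(j, k) (f j)@_(obs_mnm k))
           0 (\matrix_(k, l) (lie 'X_[obs_mnm k])@_(obs_mnm l)).

Hypothesis cycle_weight_cst : forall c : seq 'I_n, is_cycle f c ->
  exists k : RR, forall x : 'I_n -> RR, cycle_weight f c x = k.

(* The weight of a cycle is a product of nonzero polynomials, hence constant
   only if every factor is. *)
Lemma msize_gamma_on_cycle c pr : is_cycle f c -> pr \in zip c (rot 1 c) ->
  (msize (gamma f pr.1 pr.2) <= 1)%nat.
Proof.
move=> cyc pr_c; have [k weight_k] := cycle_weight_cst cyc.
have prodE : \prod_(e <- zip c (rot 1 c)) gamma f e.1 e.2 = k%:MP.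
  apply/eqP; rewrite -subr_eq0; apply/eqP/mpoly_eval_eq0 => v.
  rewrite mevalB mevalC -(weight_k v) /cycle_weight.
  by rewrite (big_morph _ (mevalM v) (meval1 v)) subrr.
have nz : all (fun e => gamma f e.1 e.2 != 0) (zip c (rot 1 c)).
  by case/and3P: cyc => _ _ /cycle_zip_edges edges; apply/allP.
apply: leq_trans (msize_prod_ge nz pr_c) _.
by rewrite prodE msizeC leq_b1.
Qed.

Lemma msupp_no_return j i m : m \in msupp (f j) -> (0 < m i)%nat -> m != U_(i)%MM ->
  ~~ connect (dep_edge f) j i.
Proof.
move=> fm mi mU; apply/negP => /(edge_on_cycle (dep_edge_msupp fm mi))[c cyc ij_c].
by have := msize_gamma_on_cycle cyc ij_c; rewrite leqNgt (msize_mderiv_gt1 fm mi mU).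
Qed.

(* A monomial of [f j] is either a variable [x_i] with an edge [v_i v_j], or
   involves only variables of strictly lower level (and has degree below the
   base). *)
Lemma wdeg_msupp j m : m \in msupp (f j) -> (wdeg m <= node_weight j)%nat.
Proof.
move=> fm; have [/existsP[i /eqP mU]|] := boolP [exists i, m == U_(i)%MM].
  rewrite mU wdegU leq_pexp2l ?level_edge_le //.
  by apply: dep_edge_msupp fm _; rewrite mU mnm1E eqxx.
rewrite negb_exists => /forallP mU.
have mlt i : (0 < m i -> level i < level j)%nat.
  move=> mi; rewrite level_edge_lt ?(dep_edge_msupp fm mi) //.
  exact: msupp_no_return fm mi (mU i).
apply: leq_trans (wdeg_le_level_bound mlt) _.
rewrite /node_weight -{2}(prednK (level_gt0 j)) expnS leq_mul2r.
by rewrite ltnW ?orbT // (mdeg_lt_weight_base fm).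
Qed.

Lemma wdeg_lieX mu nu : nu \in msupp (lie 'X_[mu]) -> (wdeg nu <= wdeg mu)%nat.
Proof.
case/msupp_sum_le/flatten_mapP => i _; rewrite mderivX.
have [->|mui] := posnP (mu i); first by rewrite scale0r mul0r msupp0.
rewrite -scalerAl => /msuppZ_le; rewrite mulrC (perm_mem (msuppMX _ _)).
case/mapP => m fm ->; have Umu : (U_(i) <= mu)%MM by rewrite lep1mP -lt0n.
by rewrite wdegD -{2}(submK Umu) wdegD wdegU leq_add2l wdeg_msupp.
Qed.

Lemma solves_on_obs (x : RR -> 'cV[RR]_n) a b : solves_on (evalVF f) x a b ->
  solves_on (mulmx superlin_mx) (fun s => col_mx (x s) (obs_vec (x s))) a b.
Proof.
move=> x_sol t tab r; rewrite mul_block_col !mul0mx !add0r.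
have fW j m : m \in msupp (f j) -> (wdeg m <= wdeg_max)%nat.
  by move/wdeg_msupp/leq_trans; apply; exact: leq_bigmax.
case: (splitP r) => [j rj|k rk].
  rewrite (_ : r = lshift _ j); last exact: val_inj.
  apply: derivable_pt_lim_congr (x_sol t tab j) => [s|]; first by rewrite col_mxEu.
  rewrite col_mxEu !mxE (meval_obs_expand _ (fW j)).
  by apply: eq_bigr => k _; rewrite !mxE.
rewrite (_ : r = rshift n k); last exact: val_inj.
apply: derivable_pt_lim_congr (derivable_pt_lim_lie _ (x_sol t tab)) => [s|].
  by rewrite col_mxEd mxE.
rewrite col_mxEd mxE meval_obs_expand => [|m /wdeg_lieX le]; last first.
  exact: leq_trans le (obs_mnm_wdeg k).
by apply: eq_bigr => l _; rewrite !mxE.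
Qed.

End Superlinearization.

Unset Implicit Arguments.
Theorem theorem1 (n : nat) (f : polyVF n) :
  (forall c : seq 'I_n, is_cycle f c ->
     exists k : RR, forall x : 'I_n -> RR, cycle_weight f c x = k) ->
  super_linearizable f.
Proof.
move=> cycle_weight_cst.
exists #|bounded_mnm f|, (superlin_mx f), 0, (@obs_vec n f).
split=> [|x0 z z0 z_sol x a b ab x0E x_sol t tab]; first exact: obs_vec_inj.
have z_lin : solves_on (mulmx (superlin_mx f)) z a b.
  move=> s _ r; have := z_sol s s _ r; rewrite addr0; apply.
  by rewrite gtrBl ltrDl ltr01.
rewrite (linear_ode_uniq ab _ z_lin (solves_on_obs cycle_weight_cst x_sol) tab).
  by rewrite /proj_first col_mxKu.
by rewrite z0 x0E.
Qed.
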